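(* Let $K$ be a field of characteristic $\neq2$ and $\tau=(1,-1,-1,-1)$. Then $\mathrm{Aut}\,A_\tau=G_5$, where $G_5=\{(\alpha_1x_1,\beta_2x_2)\mid \alpha_1,\beta_2\in K^*\}$ is the group of toric automorphisms of $K\langle x_1,x_2\rangle$.
   Context: $A=K\langle x_1,x_2\rangle$ is the free associative algebra with unit on $x_1,x_2$; $\varphi=(f_1,f_2)$ denotes the algebra endomorphism with $\varphi(x_1)=f_1$, $\varphi(x_2)=f_2$. For $q_{ij}\in K$, the diagonal braiding $\tau=(q_{11},q_{12},q_{21},q_{22})$ on $A$ is the linear map $A\otimes A\to A\otimes A$ given on words $u,v$ by $(u\otimes v)\tau=q_{11}^{s_1t_1}q_{12}^{s_1t_2}q_{21}^{s_2t_1}q_{22}^{s_2t_2}\,(v\otimes u)$, where $s_i$ (resp. $t_i$) is the number of occurrences of $x_i$ in $u$ (resp. $v$). $A_\tau$ is $A$ equipped with $\tau$, and $\mathrm{Aut}\,A_\tau$ is the group of algebra automorphisms $\varphi$ of $A$ satisfying $(\varphi\otimes\varphi)((w)\tau)=((\varphi\otimes\varphi)(w))\tau$ for all $w\in A\otimes A$, viewed as a subgroup of $\mathrm{Aut}\,K\langle x_1,x_2\rangle$. *)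

From HB Require Import structures.
From mathcomp Require Import all_boot all_order all_algebra.
Set Implicit Arguments. Unset Strict Implicit. Unset Printing Implicit Defensive.
Import GRing.Theory.
Local Open Scope ring_scope.

(* Free associative algebra K<x1,x2>, modelled by formal linear combinations
   of words.  A word is a sequence of letters in 'I_2 (letter 0 = x1,
   letter 1 = x2).  An element of A is represented by a finite list of
   (coefficient, word) pairs; two representatives denote the same element
   iff all their coefficients agree (relation [nc_eq]). *)

Definition word := seq 'I_2.

Section FreeAlg.
Variable K : fieldType.

Definition nc := seq (K * word).

Definition nc_coef (p : nc) (w : word) : K :=
  \sum_(t <- p | t.2 == w) t.1.

Definition nc_eq (p q : nc) : Prop := forall w, nc_coef p w = nc_coef q w.

Definition nc_one : nc := [:: (1, [::])].
Definition nc_var (i : 'I_2) : nc := [:: (1, [:: i])].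
Definition nc_scale (c : K) (p : nc) : nc := [seq (c * t.1, t.2) | t <- p].
Definition nc_mul (p q : nc) : nc :=
  [seq (a.1 * b.1, a.2 ++ b.2) | a <- p, b <- q].

Definition endo_word (f : 'I_2 -> nc) (u : word) : nc :=
  foldr (fun i r => nc_mul (f i) r) nc_one u.

Definition endo (f : 'I_2 -> nc) (p : nc) : nc :=
  flatten [seq nc_scale t.1 (endo_word f t.2) | t <- p].

Definition is_aut (f : 'I_2 -> nc) : Prop :=
  (forall p q, nc_eq (endo f p) (endo f q) -> nc_eq p q) /\
  (forall q, exists p, nc_eq (endo f p) q).

(* A (x) A, with basis u (x) v for words u, v. *)
Definition tens := seq (K * (word * word)).

Definition tens_coef (p : tens) (w : word * word) : K :=
  \sum_(t <- p | t.2 == w) t.1.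

Definition tens_eq (p q : tens) : Prop :=
  forall w, tens_coef p w = tens_coef q w.

Definition endo_tens (f : 'I_2 -> nc) (p : tens) : tens :=
  flatten [seq [seq (t.1 * a.1 * b.1, (a.2, b.2))
               | a <- endo_word f t.2.1, b <- endo_word f t.2.2] | t <- p].

(* diagonal braiding tau given by q : 'I_2 -> 'I_2 -> K (q i j = q_{i+1,j+1}) *)
Definition braid_coef (q : 'I_2 -> 'I_2 -> K) (u v : word) : K :=
  \prod_(i < 2) \prod_(j < 2) q i j ^+ (count_mem i u * count_mem j v).

Definition braid (q : 'I_2 -> 'I_2 -> K) (p : tens) : tens :=
  [seq (t.1 * braid_coef q t.2.1 t.2.2, (t.2.2, t.2.1)) | t <- p].

Definition in_Aut_braided (q : 'I_2 -> 'I_2 -> K) (f : 'I_2 -> nc) : Prop :=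
  is_aut f /\
  forall w : tens, tens_eq (endo_tens f (braid q w)) (braid q (endo_tens f w)).

Definition tau_lemma9 : 'I_2 -> 'I_2 -> K :=
  fun i j => if (val i == 0%N) && (val j == 0%N) then 1 else -1.

Definition in_G5 (f : 'I_2 -> nc) : Prop :=
  exists alpha beta : K, alpha != 0 /\ beta != 0 /\
    nc_eq (f ord0) (nc_scale alpha (nc_var ord0)) /\
    nc_eq (f ord_max) (nc_scale beta (nc_var ord_max)).

End FreeAlg.

(* Toric automorphisms x_i |-> c_i x_i rescale each word by a weight, hence
   commute with every diagonal braiding; this is the easy inclusion.

   Conversely, let phi = (f_1, f_2) be a braided automorphism.  Comparing
   the braiding on x_i (x) x_j with its image shows that every pair of words
   u in f_i, v in f_j is braided with the same sign as x_i, x_j; for tau this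
   gives parity constraints: words of f_1 contain x_2 an even and x_1 an odd
   number of times, words of f_2 contain x_2 an odd number of times.
   We order words by an injective key compatible with concatenation and take
   the leading words L_1, L_2 of f_1, f_2.  The leading word of phi(w) is
   then the substitution sigma(w) = w[x_1 := L_1, x_2 := L_2].  The parities
   make the letter counts of L_1, L_2 linearly independent, and such words
   generate a free monoid (Euclidean reduction), so sigma is injective and no
   cancellation occurs among leading terms.  Surjectivity of phi onto x_1,
   x_2 then forces L_i = x_i, so f_i only involves words of key at most that
   of x_i, and the parities leave x_i as the only possible word. *)

From mathcomp Require Import all_boot all_order all_algebra.
From mathcomp Require Import zify.
Set Implicit Arguments. Unset Strict Implicit. Unset Printing Implicit Defensive.
Import GRing.Theory.

Lemma I2_cases (x : 'I_2) : x = ord0 \/ x = ord_max.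
Proof. by case: x => [[|[|]]] // H; [left|right]; apply: val_inj. Qed.

Definition c0 (w : word) := count_mem (ord0 : 'I_2) w.
Definition c1 (w : word) := count_mem (ord_max : 'I_2) w.

(* [wkey] encodes words injectively (in base 3, without digit 0) by naturals;
   its order refines the length order and is compatible with concatenation,
   which makes it a convenient "leading word" order. *)
Fixpoint wkey (w : word) : nat :=
  if w is x :: w' then (nat_of_ord x).+1 * 3 ^ size w' + wkey w' else 0.

Lemma wkey_lt w : wkey w < 3 ^ size w.
Proof.
elim: w => [|x w IH] //=; rewrite expnS.
have : (nat_of_ord x).+1 <= 2 by case: x => [[|[|]]].
nia.
Qed.

Lemma wkey_ge w : 3 ^ size w <= (wkey w).*2.+1.
Proof. by elim: w => [|x w IH] //=; rewrite expnS; nia. Qed.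

Lemma wkey_cat u v : wkey (u ++ v) = wkey u * 3 ^ size v + wkey v.
Proof. by elim: u => [|x u IH] //=; rewrite IH size_cat expnD; lia. Qed.

Lemma wkey_size u v : wkey u <= wkey v -> size u <= size v.
Proof.
move=> h; rewrite leqNgt; apply/negP => hs.
have h1 := wkey_lt v; have h2 := wkey_ge u.
have h3 : 3 ^ (size v).+1 <= 3 ^ size u by rewrite leq_exp2l.
rewrite expnS in h3; nia.
Qed.

Lemma wkey_inj : injective wkey.
Proof.
move=> u v h; have hs : size u = size v.
  by apply/eqP; rewrite eqn_leq !wkey_size // h.
elim: u v hs h => [|x u IH] [|y v] //= [hs] h.
have hu := wkey_lt u; have hv := wkey_lt v.
have exy : nat_of_ord x = nat_of_ord y.
  rewrite hs in h hu; move: h; set P := 3 ^ size v.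
  have : x < y \/ x = y :> nat \/ y < x by lia.
  by case=> [lt|[//|lt]] h; exfalso; nia.
have -> : x = y by apply: val_inj.
by rewrite (IH v hs) //; move: h; rewrite exy hs; lia.
Qed.

Lemma wkey_cat_le u u' v v' : wkey u <= wkey u' -> wkey v <= wkey v' ->
  wkey (u ++ v) <= wkey (u' ++ v').
Proof.
move=> h1 h2; rewrite !wkey_cat.
have : 3 ^ size v <= 3 ^ size v' by rewrite leq_exp2l // wkey_size.
nia.
Qed.

Lemma wkey_cat_eq u u' v v' : wkey u <= wkey u' -> wkey v <= wkey v' ->
  wkey (u ++ v) = wkey (u' ++ v') -> u = u' /\ v = v'.
Proof.
move=> h1 h2; rewrite !wkey_cat => h.
have hP : 3 ^ size v <= 3 ^ size v' by rewrite leq_exp2l // wkey_size.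
have hv := wkey_lt v.
have e1 : wkey u = wkey u'.
  apply/eqP; rewrite eqn_leq h1 /= leqNgt; apply/negP => lt; move: h; nia.
split; first exact: wkey_inj.
apply: wkey_inj; rewrite e1 in h.
apply/eqP; rewrite eqn_leq h2 /= leqNgt; apply/negP => lt; move: h; nia.
Qed.

Lemma wkey_le2 u : wkey u <= 2 -> [\/ u = [::], u = [:: ord0] | u = [:: ord_max]].
Proof.
case: u => [|x [|y w]] /=; first by constructor 1.
  by rewrite muln1 addn0 => _; case: (I2_cases x) => ->; [constructor 2|constructor 3].
by have := expn_gt0 3 (size w); rewrite expnS; nia.
Qed.

Definition wsub (a b : word) (w : word) : word :=
  flatten [seq if x == ord0 then a else b | x <- w].

Lemma wsub_cons a b x w : wsub a b (x :: w) = (if x == ord0 then a else b) ++ wsub a b w.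
Proof. by []. Qed.

Lemma wsub_swap a b w : wsub a b w = wsub b a (map (@rev_ord 2) w).
Proof. by elim: w => [|x w IH] //; rewrite !wsub_cons IH; case: (I2_cases x) => ->. Qed.

Lemma wsub_inj_first_letters a b : 0 < size a -> 0 < size b ->
  (forall w1 w2, wsub a b (ord0 :: w1) != wsub a b (ord_max :: w2)) ->
  injective (wsub a b).
Proof.
move=> sa sb hfirst.
elim=> [|x w IH] [|y w'] //.
- by rewrite wsub_cons => /(congr1 size); rewrite size_cat; case: ifP => _ /= h; exfalso; lia.
- by rewrite wsub_cons => /(congr1 size); rewrite size_cat; case: ifP => _ /= h; exfalso; lia.
case: (I2_cases x) => ->; case: (I2_cases y) => ->.
- by move/eqP; rewrite !wsub_cons eqseq_cat // eqxx => /eqP/IH ->.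
- by move/eqP; rewrite (negbTE (hfirst _ _)).
- by move/esym/eqP; rewrite (negbTE (hfirst _ _)).
- by move/eqP; rewrite !wsub_cons eqseq_cat // eqxx => /eqP/IH ->.
Qed.

Definition rho := wsub [:: ord0] [:: ord0; ord_max].

Lemma rho_inj : injective rho.
Proof.
apply: wsub_inj_first_letters => // w1 w2; rewrite /rho !wsub_cons /=.
rewrite eqseq_cons eqxx /=.
by case: w1 => [|x w1] //; case: (I2_cases x) => ->.
Qed.

Lemma wsub_rho a c w : wsub a (a ++ c) w = wsub a c (rho w).
Proof.
elim: w => [|x w IH] //; rewrite /rho !wsub_cons IH -/rho.
by case: (I2_cases x) => -> //=; rewrite !wsub_cons /= catA.
Qed.

Definition indep (a b : word) := c0 a * c1 b != c1 a * c0 b.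

Lemma indep_sym a b : indep a b = indep b a.
Proof. by rewrite /indep eq_sym mulnC [c1 b * _]mulnC. Qed.

Lemma indep_prefix a c : indep a (a ++ c) = indep a c.
Proof.
by rewrite /indep /c0 /c1 !count_cat !mulnDr; apply/idP/idP; apply: contra => /eqP h; apply/eqP; lia.
Qed.

(* The proof is
   the Euclidean reduction b = a ++ c along the shorter word. *)
Lemma wsub_inj_indep a b : indep a b -> injective (wsub a b).
Proof.
move: {2}(size a + size b) (leqnn (size a + size b)) => n.
elim: n a b => [|n IHn] a b hn hind.
  by move: hn hind; case: a => //; case: b.
have ha : 0 < size a by case: a hind hn.
have hb : 0 < size b by case: b hind hn => //; rewrite /indep /c0 /c1 /= !muln0.
apply: wsub_inj_first_letters => // w1 w2; apply/eqP.
wlog hab : a b w1 w2 hn hind ha hb / size a <= size b => [hwlog|].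
  case: (leqP (size a) (size b)) => [|/ltnW hba]; first exact: hwlog.
  rewrite !(wsub_swap a b) => /esym; apply: hwlog => //; first by rewrite addnC.
  by rewrite indep_sym.
rewrite !wsub_cons /= => heq.
have ebc : b = a ++ drop (size a) b.
  rewrite -{1}(cat_take_drop (size a) b); congr (_ ++ _).
  by have := congr1 (take (size a)) heq; rewrite take_size_cat // takel_cat.
have hinj : injective (wsub a (drop (size a) b)).
  apply: IHn; last by rewrite -indep_prefix -ebc.
  by move: hn; rewrite [in size b]ebc size_cat; lia.
suff : rho (ord0 :: w1) = rho (ord_max :: w2) by move/rho_inj.
by apply: hinj; rewrite -!wsub_rho -ebc !wsub_cons.
Qed.

Local Open Scope ring_scope.

Lemma sum_pick (V : nmodType) (T : eqType) (r : seq T) (j : T) (G : T -> V) :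
  j \in r -> uniq r -> \sum_(i <- r) (if i == j then G i else 0) = G j.
Proof.
move=> jr ur; rewrite (bigD1_seq j) //= eqxx big1 ?addr0 // => i /negbTE -> //.
Qed.

Lemma sum_nz (V : nmodType) (T : eqType) (r : seq T) (F : T -> V) :
  \sum_(i <- r) F i != 0 -> exists2 i, i \in r & F i != 0.
Proof.
elim: r => [|x r IH]; first by rewrite big_nil eqxx.
rewrite big_cons; case: (F x =P 0) => [->|/eqP h _]; last by exists x; rewrite ?mem_head.
by rewrite add0r => /IH [i ir hi]; exists i; rewrite ?inE ?ir ?orbT.
Qed.

Lemma exists_max (T : eqType) (s : seq T) (g : T -> nat) : s != [::] ->
  exists2 x, x \in s & forall y, y \in s -> (g y <= g x)%N.
Proof.
elim: s => [|x s IH] // _.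
case: (eqVneq s [::]) => [->|/IH [z zs hz]].
  by exists x; rewrite ?mem_head // => y; rewrite inE => /eqP ->.
case: (leqP (g x) (g z)) => h.
  exists z; first by rewrite inE zs orbT.
  by move=> y; rewrite inE => /orP [/eqP ->|/hz].
exists x; first exact: mem_head.
move=> y; rewrite inE => /orP [/eqP ->//|/hz h2]; exact: leq_trans h2 (ltnW h).
Qed.

Lemma regroup (R : pzSemiRingType) (T : eqType) (p : seq (R * T)) (F : T -> R) :
  \sum_(t <- p) t.1 * F t.2 =
  \sum_(u <- undup (map snd p)) (\sum_(t <- p | t.2 == u) t.1) * F u.
Proof.
under [RHS]eq_bigr => u _ do rewrite mulr_suml big_mkcond.
rewrite [RHS]exchange_big /= [LHS]big_seq [RHS]big_seq; apply: eq_bigr => t tp.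
rewrite -(@sum_pick R T (undup (map snd p)) t.2 (fun u => t.1 * F u)); last exact: undup_uniq.
  by apply: eq_bigr => u _; rewrite eq_sym; case: eqP => // ->.
by rewrite mem_undup; apply: map_f.
Qed.

Lemma cat_eqE (u v M : word) :
  (u ++ v == M) = (u == take (size u) M) && (v == drop (size u) M).
Proof.
apply/eqP/andP => [<-|[/eqP hu /eqP hv]]; last by rewrite hv {1}hu cat_take_drop.
by rewrite take_size_cat // drop_size_cat.
Qed.

Section Coefficients.
Variable K : fieldType.
Implicit Types (p q : nc K) (f : 'I_2 -> nc K).

Lemma coef_single (c : K) u M : nc_coef [:: (c, u)] M = if M == u then c else 0.
Proof. by rewrite /nc_coef big_cons big_nil /= addr0 eq_sym. Qed.

Lemma coef_one M : nc_coef (nc_one K) M = if M == [::] then 1 else 0.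
Proof. exact: coef_single. Qed.

Lemma coef_var i M : nc_coef (nc_var K i) M = if M == [:: i] then 1 else 0.
Proof. exact: coef_single. Qed.

Lemma coef_scale c p M : nc_coef (nc_scale c p) M = c * nc_coef p M.
Proof.
rewrite /nc_coef /nc_scale big_map mulr_sumr big_mkcond [RHS]big_mkcond.
by apply: eq_bigr => t _ /=; case: ifP; rewrite ?mulr0.
Qed.

Lemma coef_mem p M : nc_coef p M != 0 -> M \in map snd p.
Proof.
apply: contraR => hM; rewrite /nc_coef big1_seq // => t /andP [/eqP ht tp].
by move: hM; rewrite -ht map_f.
Qed.

Lemma coef_mul p q M :
  nc_coef (nc_mul p q) M =
  \sum_(u <- undup (map snd p)) nc_coef p u *
     (if u == take (size u) M then nc_coef q (drop (size u) M) else 0).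
Proof.
rewrite /nc_coef /nc_mul big_flatten big_map.
rewrite -(regroup p (fun u => if u == take (size u) M then
      \sum_(t <- q | t.2 == drop (size u) M) t.1 else 0)).
apply: eq_bigr => a _; rewrite big_map /=.
case: ifP => ha.
  rewrite mulr_sumr big_mkcond [RHS]big_mkcond; apply: eq_bigr => b _ /=.
  by rewrite cat_eqE ha /=; case: ifP.
by rewrite big1 ?mulr0 // => b; rewrite cat_eqE ha.
Qed.

Lemma coef_endo f p M :
  nc_coef (endo f p) M = \sum_(t <- p) t.1 * nc_coef (endo_word f t.2) M.
Proof.
rewrite /nc_coef /endo big_flatten big_map; apply: eq_bigr => t _.
exact: coef_scale.
Qed.

Lemma coef_endo_undup f p M :
  nc_coef (endo f p) M =
  \sum_(u <- undup (map snd p)) nc_coef p u * nc_coef (endo_word f u) M.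
Proof. by rewrite coef_endo (regroup p (fun u => nc_coef (endo_word f u) M)). Qed.

Lemma coef_endo_letter f i M : nc_coef (endo_word f [:: i]) M = nc_coef (f i) M.
Proof.
rewrite /nc_coef /= /nc_mul /nc_one big_flatten big_map [RHS]big_mkcond.
by apply: eq_bigr => a _; rewrite big_cons big_nil /= cats0 mulr1 addr0.
Qed.

Lemma tcoef_endo f (X : tens K) M N :
  tens_coef (endo_tens f X) (M, N) = \sum_(t <- X) t.1 *
     nc_coef (endo_word f t.2.1) M * nc_coef (endo_word f t.2.2) N.
Proof.
rewrite /tens_coef /endo_tens big_flatten big_map; apply: eq_bigr => t _.
rewrite big_flatten big_map /nc_coef -mulrA mulr_suml mulr_sumr.
rewrite [RHS]big_mkcond; apply: eq_bigr => a _.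
rewrite big_map; case ha: (a.2 == M).
  rewrite mulrA mulr_sumr big_mkcond [RHS]big_mkcond; apply: eq_bigr => b _ /=.
  by rewrite xpair_eqE ha /=; case: (b.2 == N); rewrite ?mulrA.
by rewrite big1 // => b; rewrite xpair_eqE ha.
Qed.

Lemma tcoef_braid (q : 'I_2 -> 'I_2 -> K) (X : tens K) M N :
  tens_coef (braid q X) (M, N) = braid_coef q N M * tens_coef X (N, M).
Proof.
rewrite /tens_coef /braid big_map mulr_sumr big_mkcond [RHS]big_mkcond.
apply: eq_bigr => [[c [u v]]] _ /=; rewrite !xpair_eqE andbC.
by case: ifP => [/andP [/eqP -> /eqP ->]|]; rewrite ?mulr0 // mulrC.
Qed.

Lemma leading_word p u : nc_coef p u != 0 ->
  exists L, nc_coef p L != 0 /\ forall v, nc_coef p v != 0 -> (wkey v <= wkey L)%N.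
Proof.
move=> hu; set S := [seq v <- undup (map snd p) | nc_coef p v != 0].
have memS v : nc_coef p v != 0 -> v \in S.
  by move=> hv; rewrite mem_filter hv mem_undup coef_mem.
have hS : S != [::] by apply/eqP => h; have := memS u hu; rewrite h.
have [L LS hL] := exists_max wkey hS.
exists L; split; first by move: LS; rewrite mem_filter => /andP [].
by move=> v /memS /hL.
Qed.

Lemma support_letter p x : (forall u, nc_coef p u != 0 -> u = [:: x]) ->
  nc_eq p (nc_scale (nc_coef p [:: x]) (nc_var K x)).
Proof.
move=> hp M; rewrite coef_scale coef_var.
case: (M =P [:: x]) => [->|hM]; first by rewrite mulr1.
by rewrite mulr0; apply/eqP; apply: contraT => /hp.
Qed.

End Coefficients.

Section LeadingWords.
Variables (K : fieldType) (f : 'I_2 -> nc K) (L : 'I_2 -> word).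
Hypothesis lead_nz : forall x, nc_coef (f x) (L x) != 0.
Hypothesis lead_max : forall x u, nc_coef (f x) u != 0 -> (wkey u <= wkey (L x))%N.

Definition sigL := wsub (L ord0) (L ord_max).

Lemma sigL_cons x w : sigL (x :: w) = L x ++ sigL w.
Proof. by rewrite /sigL wsub_cons; case: (I2_cases x) => ->. Qed.

Lemma endo_word_lead w :
  (forall M, nc_coef (endo_word f w) M != 0 -> (wkey M <= wkey (sigL w))%N) /\
  nc_coef (endo_word f w) (sigL w) != 0.
Proof.
elim: w => [|x w [IH1 IH2]].
  split; last by rewrite coef_one eqxx oner_eq0.
  by move=> M; rewrite coef_one; case: (M =P [::]) => [->|_]; rewrite ?eqxx.
rewrite [endo_word _ _]/= sigL_cons; split.
  move=> M; rewrite coef_mul => /sum_nz [u _]; case: ifP => hu; last by rewrite mulr0 eqxx.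
  rewrite mulf_eq0 negb_or => /andP [hcu /IH1 hd].
  rewrite -(cat_take_drop (size u) M) -(eqP hu).
  exact: wkey_cat_le (lead_max hcu) hd.
rewrite coef_mul (bigD1_seq (L x)) /=; first last.
- exact: undup_uniq.
- by rewrite mem_undup; apply: coef_mem.
rewrite take_size_cat // drop_size_cat // eqxx big1_seq ?addr0; first by rewrite mulf_neq0.
move=> u /andP [hne _]; apply/eqP; apply: contraR hne => hnz.
move: hnz; case: ifP => hu; last by rewrite mulr0 eqxx.
rewrite mulf_eq0 negb_or => /andP [hcu /IH1 hd].
have := wkey_cat_eq (lead_max hcu) hd.
by rewrite {1}(eqP hu) cat_take_drop => /(_ erefl) [-> _].
Qed.

Hypothesis sigL_inj : injective sigL.

(* When sigL is injective, the word w of p maximizing sigL w survives in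
   phi(p): in particular phi(p) is nonzero whenever p is. *)
Lemma endo_lead p u : nc_coef p u != 0 -> exists w, nc_coef (endo f p) (sigL w) != 0.
Proof.
move=> hu; set S := [seq v <- undup (map snd p) | nc_coef p v != 0].
have hS : S != [::].
  apply/eqP => hS0; suff : u \in S by rewrite hS0.
  by rewrite mem_filter hu mem_undup coef_mem.
have [w wS hw] := exists_max (fun v => wkey (sigL v)) hS.
move: wS; rewrite mem_filter => /andP [hcw wU]; exists w.
rewrite coef_endo_undup (bigD1_seq w) //=; last exact: undup_uniq.
rewrite big1_seq ?addr0; first by rewrite mulf_neq0 // (endo_word_lead w).2.
move=> v /andP [hne vU]; apply/eqP; apply: contraR hne => hnz.
move: hnz; rewrite mulf_eq0 negb_or => /andP [hcp /((endo_word_lead v).1) h1].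
have vS : v \in S by rewrite mem_filter hcp.
apply/eqP/sigL_inj/wkey_inj/eqP; rewrite eqn_leq hw //.
Qed.

Lemma surj_lead_letter p i : (forall x, L x != [::]) ->
  nc_eq (endo f p) (nc_var K i) -> exists x, L x = [:: i].
Proof.
move=> hne heq.
have [u _] : exists2 u, u \in undup (map snd p) & nc_coef p u * nc_coef (endo_word f u) [:: i] != 0.
  by apply: sum_nz; rewrite -coef_endo_undup heq coef_var eqxx oner_neq0.
rewrite mulf_eq0 negb_or => /andP [/endo_lead [w]].
rewrite heq coef_var; case: ifP => [/eqP hw _ _|]; last by rewrite eqxx.
case: w hw => [|x w] //; rewrite sigL_cons; exists x.
by move: (hne x) hw; case: (L x) => [|a [|b l]] //= _ [->]; case: (sigL w).
Qed.

End LeadingWords.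

Lemma m1_neq1 (K : fieldType) : ~~ (2%N \in [pchar K]%R) -> (-1 : K) != 1.
Proof.
apply: contra => /eqP e; rewrite inE /=.
by apply/eqP; rewrite -[2%N]/(1 + 1)%N natrD -{1}e addNr.
Qed.

Lemma sign_odd_inj (K : fieldType) m n : (-1 : K) != 1 ->
  (-1) ^+ m = (-1) ^+ n :> K -> odd m = odd n.
Proof.
move=> hn; rewrite -signr_odd -[RHS]signr_odd.
by case: (odd m); case: (odd n) => //= /eqP; rewrite ?expr0 ?expr1 ?(negbTE hn) // eq_sym (negbTE hn).
Qed.

Definition tau_exp (u v : word) := (c0 u * c1 v + c1 u * c0 v + c1 u * c1 v)%N.

Lemma braid_coef_tau (K : fieldType) u v :
  braid_coef (tau_lemma9 K) u v = (-1) ^+ tau_exp u v.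
Proof.
rewrite /braid_coef !big_ord_recl !big_ord0 /tau_lemma9 /= !mulr1.
have -> : lift ord0 ord0 = ord_max :> 'I_2 by apply: val_inj.
by rewrite /c0 /c1 expr1n mul1r -!exprD addnA.
Qed.

Lemma odd_tau_exp_diag u : odd (tau_exp u u) = odd (c1 u).
Proof.
have -> : tau_exp u u = (c1 u * c1 u + (c0 u * c1 u).*2)%N by rewrite /tau_exp -addnn mulnC; lia.
by rewrite oddD odd_double addbF oddM andbb.
Qed.

Section TauBraided.
Variables (K : fieldType) (f : 'I_2 -> nc K).
Hypothesis hchar : ~~ (2%N \in [pchar K]%R).
Hypothesis hbr : forall w, tens_eq (endo_tens f (braid (tau_lemma9 K) w))
                                  (braid (tau_lemma9 K) (endo_tens f w)).

(* Comparing both sides of the braiding relation on x_i (x) x_j at the word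
   v (x) u: every pair of words u in f i, v in f j is braided like x_i, x_j. *)
Lemma braid_parity i j u v :
  nc_coef (f i) u != 0 -> nc_coef (f j) v != 0 ->
  odd (tau_exp [:: i] [:: j]) = odd (tau_exp u v).
Proof.
move=> hu hv; apply: (sign_odd_inj (m1_neq1 hchar)); rewrite -!braid_coef_tau.
have := hbr [:: (1, ([:: i], [:: j]))] (v, u).
rewrite tcoef_endo tcoef_braid tcoef_endo /braid /= !big_cons !big_nil /= !addr0.
rewrite !coef_endo_letter !mul1r -mulrA [X in _ * X = _]mulrC.
exact: (mulIf (mulf_neq0 hu hv)).
Qed.

Lemma f1_even_c1 u : nc_coef (f ord0) u != 0 -> ~~ odd (c1 u).
Proof. by move=> hu; rewrite -odd_tau_exp_diag -(braid_parity hu hu). Qed.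

Lemma f2_odd_c1 v : nc_coef (f ord_max) v != 0 -> odd (c1 v).
Proof. by move=> hv; rewrite -odd_tau_exp_diag -(braid_parity hv hv). Qed.

Lemma f1_odd_c0 u v : nc_coef (f ord0) u != 0 -> nc_coef (f ord_max) v != 0 -> odd (c0 u).
Proof.
move=> hu hv; have := braid_parity hu hv; rewrite /tau_exp !oddD !oddM.
by rewrite (negbTE (f1_even_c1 hu)) (f2_odd_c1 hv) /= !andbT !addbF => <-.
Qed.

End TauBraided.

Lemma inj_letter_nz (K : fieldType) (f : 'I_2 -> nc K) :
  (forall p q, nc_eq (endo f p) (endo f q) -> nc_eq p q) ->
  forall x, exists u, nc_coef (f x) u != 0.
Proof.
move=> hinj x.
case: (boolP (has (fun u => nc_coef (f x) u != 0) (map snd (f x)))) => [/hasP [u _ hu]|hall].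
  by exists u.
have hz u : nc_coef (f x) u = 0.
  by apply/eqP; apply: contraNT hall => hu; apply/hasP; exists u => //; apply: coef_mem.
have heq : nc_eq (endo f [:: (1, [:: x])]) (endo f [::]).
  by move=> M; rewrite !coef_endo big_cons !big_nil coef_endo_letter hz mulr0 addr0.
have := hinj _ _ heq [:: x]; rewrite coef_single eqxx /nc_coef big_nil => /eqP.
by rewrite oner_eq0.
Qed.

(* The leading
   words of f_1, f_2 have independent letter counts by the parity
   constraints, so surjectivity forces them to be the letters themselves;
   the images then have no room for any other word. *)
Lemma braided_aut_support (K : fieldType) (hchar : ~~ (2%N \in [pchar K]%R))
    (f : 'I_2 -> nc K) :
  in_Aut_braided (tau_lemma9 K) f -> forall x u, nc_coef (f x) u != 0 -> u = [:: x].
Proof.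
move=> [[hinj hsurj] hbr].
have /fin_all_exists [L hL] : forall x, exists Lx : word, nc_coef (f x) Lx != 0 /\
    forall u, nc_coef (f x) u != 0 -> (wkey u <= wkey Lx)%N.
  by move=> x; have [u hu] := inj_letter_nz hinj x; exact: leading_word hu.
have lead_nz x : nc_coef (f x) (L x) != 0 := (hL x).1.
have lead_max x u : nc_coef (f x) u != 0 -> (wkey u <= wkey (L x))%N := (hL x).2 u.
have c1_L0 := f1_even_c1 hchar hbr (lead_nz ord0).
have c1_L1 := f2_odd_c1 hchar hbr (lead_nz ord_max).
have c0_L0 := f1_odd_c0 hchar hbr (lead_nz ord0) (lead_nz ord_max).
have hind : indep (L ord0) (L ord_max).
  by apply/eqP => /(congr1 odd); rewrite !oddM c0_L0 c1_L1 (negbTE c1_L0).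
have hne x : L x != [::].
  by case: (I2_cases x) => ->; [move: c0_L0 | move: c1_L1]; case: (L _).
have lead_letter x : L x = [:: x].
  have [p hp] := hsurj (nc_var K x).
  have [y hy] := surj_lead_letter lead_nz lead_max (wsub_inj_indep hind) hne hp.
  by case: (I2_cases x) (I2_cases y) hy => -> [] -> hy //; [move: c1_L1 | move: c1_L0]; rewrite hy.
move=> x u hu.
have : (wkey u <= 2)%N.
  by apply: leq_trans (lead_max _ _ hu) _; rewrite lead_letter; case: (I2_cases x) => ->.
case/wkey_le2 => hu0; subst u; case: (I2_cases x) hu => -> hu //.
- by have := f1_odd_c0 hchar hbr hu (lead_nz ord_max).
- by have := f2_odd_c1 hchar hbr hu.
- by have := f2_odd_c1 hchar hbr hu.
- by have := f1_even_c1 hchar hbr hu.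
Qed.

Section Toric.
Variables (K : fieldType) (f : 'I_2 -> nc K) (g : 'I_2 -> K).
Hypothesis f_toric : forall x M, nc_coef (f x) M = if M == [:: x] then g x else 0.
Hypothesis g_nz : forall x, g x != 0.

Definition weight (w : word) : K := \prod_(x <- w) g x.

Lemma weight_nz w : weight w != 0.
Proof. by elim: w => [|x w IH]; rewrite /weight ?big_nil ?oner_neq0 // big_cons mulf_neq0. Qed.

Lemma toric_word w M :
  nc_coef (endo_word f w) M = if M == w then weight w else 0.
Proof.
elim: w M => [|x w IH] M; first by rewrite coef_one /weight big_nil.
rewrite [endo_word _ _]/= coef_mul.
under eq_bigr => u _ do rewrite f_toric (fun_if (fun c => c * _)) mul0r.
rewrite sum_pick; last exact: undup_uniq.
  case: M => [|y M] /=; first by rewrite mulr0.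
  rewrite take0 drop0 IH !eqseq_cons /weight big_cons -/(weight w) (eq_sym x).
  by case: (y == x); case: (M == w); rewrite ?mulr0.
by rewrite mem_undup; apply: coef_mem; rewrite f_toric eqxx.
Qed.

Lemma toric_coef p M : nc_coef (endo f p) M = nc_coef p M * weight M.
Proof.
rewrite coef_endo /nc_coef mulr_suml [RHS]big_mkcond; apply: eq_bigr => t _ /=.
by rewrite -/(nc_coef _ M) toric_word eq_sym; case: ifP => [/eqP ->|]; rewrite ?mulr0 ?mul0r.
Qed.

Lemma toric_tens_coef (X : tens K) M N :
  tens_coef (endo_tens f X) (M, N) = tens_coef X (M, N) * weight M * weight N.
Proof.
rewrite tcoef_endo /tens_coef !mulr_suml [RHS]big_mkcond.
apply: eq_bigr => [[c [u v]]] _ /=.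
rewrite !toric_word xpair_eqE (eq_sym M) (eq_sym N).
by case: (u =P M) => [->|]; case: (v =P N) => [->|] /=; rewrite ?mulr0 ?mul0r.
Qed.

Lemma toric_aut : is_aut f.
Proof.
split=> [p q h M|q]; first by apply: (mulIf (weight_nz M)); rewrite -!toric_coef h.
exists [seq (t.1 / weight t.2, t.2) | t <- q] => M; rewrite toric_coef.
rewrite /nc_coef big_map /= mulr_suml; apply: eq_bigr => t /eqP ->.
by rewrite divfK // weight_nz.
Qed.

Lemma toric_braided (q : 'I_2 -> 'I_2 -> K) (X : tens K) :
  tens_eq (endo_tens f (braid q X)) (braid q (endo_tens f X)).
Proof.
move=> [M N]; rewrite toric_tens_coef !tcoef_braid toric_tens_coef.
by rewrite -!mulrA; congr (_ * (_ * _)); rewrite mulrC.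
Qed.

End Toric.

Theorem lemma9 (K : fieldType) (hchar : ~~ (2%N \in [pchar K]%R)) (f : 'I_2 -> nc K) :
  in_Aut_braided (tau_lemma9 K) f <-> in_G5 f.
Proof.
split=> [haut|[a [b [ha [hb [h0 h1]]]]]].
  have hsupp := braided_aut_support hchar haut.
  have hnz x : nc_coef (f x) [:: x] != 0.
    by have [u hu] := inj_letter_nz haut.1.1 x; rewrite -(hsupp x u hu).
  exists (nc_coef (f ord0) [:: ord0]), (nc_coef (f ord_max) [:: ord_max]).
  by do !split; rewrite ?hnz //; apply: support_letter; apply: hsupp.
pose g (x : 'I_2) := if x == ord0 then a else b.
have g_nz x : g x != 0 by case: (I2_cases x) => ->.
have f_toric x M : nc_coef (f x) M = if M == [:: x] then g x else 0.
  by case: (I2_cases x) => ->; rewrite ?h0 ?h1 coef_scale coef_var; case: ifP; rewrite ?mulr1 ?mulr0.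
by split; [exact: toric_aut g_nz | exact: toric_braided].
Qed.
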